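(* Let $G=(V,E)$ be a graph, let $D\subseteq V$, and let $P$ be a path in $G$ that is a shortest path (between its endpoints) in the induced subgraph $G[P\cup D]$. Suppose the robber is confined to $D$. Then five cops have a strategy to guard $N[P]$, after a finite number of initial moves.
   Context: Game of cops and robber on a finite graph: cops are placed, then the robber; players alternate starting with cops; each piece stays or moves to an adjacent vertex; the robber is captured when a cop occupies his vertex. Given a strategy of the cops, the robber cannot safely move to a vertex $v$ if the strategy ensures he is immediately captured after moving to $v$; the strategy guards a set $P$ of vertices if the robber cannot safely move to any vertex of $P$; the robber is confined to $D$ if the strategy ensures he is immediately captured upon moving to any vertex of $V\setminus D$. $N[X]=\bigcup_{v\in X}(\{v\}\cup\{u: uv\in E\})$ is the closed neighborhood of a vertex set $X$. *)

From mathcomp Require Import all_boot.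
Set Implicit Arguments. Unset Strict Implicit. Unset Printing Implicit Defensive.

(* A finite simple graph: vertex type T : finType, adjacency e : rel T,
   assumed symmetric and irreflexive in the theorem. *)

Definition closed_nbhd (T : finType) (e : rel T) (X : {set T}) : {set T} :=
  [set v | [exists x in X, (v == x) || e x v]].

Definition step (T : finType) (e : rel T) (u v : T) : bool := (u == v) || e u v.

Definition is_path (T : finType) (e : rel T) (s : seq T) : Prop :=
  s != [::] /\ sorted e s /\ uniq s.

Definition induced (T : finType) (e : rel T) (S : {set T}) : rel T :=
  [rel u v | [&& e u v, u \in S & v \in S]].

Definition shortest_in (T : finType) (e : rel T) (S : {set T})
    (x0 : T) (p : seq T) : Prop :=
  [/\ x0 \in S, all (mem S) p &
    forall q : seq T, path (induced e S) x0 q -> last x0 q = last x0 p ->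
      size p <= size q].

(* A strategy for k cops: from the history [:: r0; r1; ...; rn] of robber
   positions so far, it gives the cops' positions.  s [::] is the initial
   placement; s (rcons h r) is the cops' position after responding to the
   robber moving to r. *)
Definition strategy (T : finType) (k : nat) := seq T -> {ffun 'I_k -> T}.

Definition valid_strategy (T : finType) (e : rel T) (k : nat)
    (s : strategy T k) : Prop :=
  forall (h : seq T) (r : T) (i : 'I_k), step e (s h i) (s (rcons h r) i).

Definition robber_walk (T : finType) (e : rel T) (D : {set T}) (h : seq T) : bool :=
  all (mem D) h && sorted (step e) h.

(* The robber, after history h, moves to (or is placed on / stays at) r and is
   immediately captured: either he lands on a cop, or a cop moves onto him in
   the cops' response. *)
Definition captured_after (T : finType) (k : nat) (s : strategy T k)
    (h : seq T) (r : T) : bool :=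
  [exists i, (s h i == r) || (s (rcons h r) i == r)].

Definition caught_during (T : finType) (k : nat) (s : strategy T k)
    (h : seq T) : Prop :=
  exists h1 r h2, h = h1 ++ r :: h2 /\ captured_after s h1 r.

Definition eventually_guards (T : finType) (e : rel T) (D X : {set T})
    (k : nat) (s : strategy T k) : Prop :=
  exists N : nat, forall (h : seq T) (r : T),
    robber_walk e D (rcons h r) -> N <= size h -> ~ caught_during s h ->
    r \in X -> captured_after s h r.

From mathcomp Require Import all_boot zify.

Set Implicit Arguments. Unset Strict Implicit. Unset Printing Implicit Defensive.

(* Let [d] be the distance from the first vertex [x0] of [P] in [G[P ∪ D]].
   As [P] is a shortest path there, its [i]-th vertex is at distance [i], and
   [d] changes by at most one at each move of the robber, who stays in [D].
   Cop [k] (k = 0..4) walks along [P], one step per turn, towards the vertex of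
   index [d(r) + k - 2] (clamped to [P]), where [r] is the robber's position;
   since this target also moves by at most one per turn, the cop reaches it
   after [|P|] turns and stays on it from then on.  If the robber now moves
   from [l] to a vertex [r] next to the [i]-th vertex of [P], then
   [|d(r) - i| <= 1] and [|d(l) - d(r)| <= 1], so cop [i + 2 - d(l)] stands on
   that vertex and captures him. *)

Definition near1 (a b : nat) : bool := (a <= b.+1) && (b <= a.+1).

Lemma near1_sym : symmetric near1.
Proof. by move=> a b; rewrite /near1 andbC. Qed.

Lemma near1_shift n k a b :
  near1 a b -> near1 (minn n (a + k - 2)) (minn n (b + k - 2)).
Proof. by move=> /andP[? ?]; apply/andP; split; lia. Qed.

Definition toward (c t : nat) : nat :=
  if c < t then c.+1 else if t < c then c.-1 else c.

Lemma foldl_toward_on_target t ts :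
  path near1 t ts -> foldl toward t ts = last t ts.
Proof.
elim: ts t => //= b ts IH t /andP[/andP[tb bt] pts].
suff -> : toward t b = b by exact: IH.
by rewrite /toward; case: ltnP => ?; [|case: ltnP => ?]; lia.
Qed.

Lemma foldl_toward_chase c t ts : path near1 t ts -> c <= t ->
  foldl toward c ts = last t ts \/
  c + size ts <= foldl toward c ts <= last t ts.
Proof.
elim: ts c t => [|b ts IH] c t /=; first by right; lia.
move=> /andP[/andP[tb bt] pts] ct.
case: (ltnP c b) => cb.
  have -> : toward c b = c.+1 by rewrite /toward cb.
  by case: (IH c.+1 b pts cb) => [->|?]; [left|right; lia].
have -> : toward c b = b.
  by rewrite /toward; case: ltnP => ?; [|case: ltnP => ?]; lia.
by left; exact: foldl_toward_on_target.
Qed.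

Lemma foldl_toward_catches n ts : sorted near1 ts -> last 0 ts <= n ->
  n < size ts -> foldl toward 0 ts = last 0 ts.
Proof.
case: ts => [|t ts] //= pts tsn ntsn.
have le_t : toward 0 t <= t by rewrite /toward; case: ifP => ?; lia.
by case: (foldl_toward_chase pts le_t) => [|?] //; lia.
Qed.

Lemma sorted_rcons2 (T : Type) (r : rel T) s a b :
  sorted r (rcons (rcons s a) b) = sorted r (rcons s a) && r a b.
Proof. by rewrite -cats1 -(cats1 s) -catA /= sorted_cat_cons cats1 /= andbT. Qed.

Lemma step_sym (T : finType) (e : rel T) : symmetric e -> symmetric (step e).
Proof. by move=> e_sym u v; rewrite /step eq_sym e_sym. Qed.

Section Distance.

Variables (T : finType) (g : rel T) (x0 : T).
Hypothesis g_sym : symmetric g.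

Definition walk_of_size (k : nat) (v : T) : bool :=
  [exists q : k.-tuple T, path g x0 q && (last x0 q == v)].

Lemma dist_subproof v : exists k, walk_of_size k v || ~~ connect g x0 v.
Proof.
case: (boolP (connect g x0 v)) => [/connectP[q qp ->]|_]; last first.
  by exists 0; rewrite orbT.
exists (size q); apply/orP; left.
by apply/existsP; exists (in_tuple q); rewrite /= qp eqxx.
Qed.

(* Vertices not reachable from [x0] get distance [0]; for symmetric [g] this
   makes [dist_edge] hold for every edge. *)
Definition dist (v : T) : nat := ex_minn (dist_subproof v).

Lemma dist_le q : path g x0 q -> dist (last x0 q) <= size q.
Proof.
move=> qp; rewrite /dist; case: ex_minnP => k _; apply.
by apply/orP; left; apply/existsP; exists (in_tuple q); rewrite /= qp eqxx.
Qed.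

Lemma dist_walk v : connect g x0 v ->
  exists2 q, path g x0 q & last x0 q = v /\ size q = dist v.
Proof.
rewrite /dist; case: ex_minnP => k + _ xv; rewrite xv orbF.
by case/existsP=> q /andP[qp /eqP qv]; exists q; rewrite ?size_tuple.
Qed.

Lemma dist_unreachable v : ~~ connect g x0 v -> dist v = 0.
Proof.
move=> xv; rewrite /dist; case: ex_minnP => k _ /(_ 0).
by rewrite /= xv orbT; case: k => // k /(_ isT).
Qed.

Lemma dist_edge u v : g u v -> dist v <= (dist u).+1.
Proof.
move=> uv; case: (boolP (connect g x0 u)) => xu.
  have [q qp [qu <-]] := dist_walk xu.
  have := @dist_le (rcons q v); rewrite last_rcons size_rcons; apply.
  by rewrite rcons_path qp qu.
suff /dist_unreachable -> : ~~ connect g x0 v by [].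
by apply: contra xu => xv; apply: connect_trans xv (connect1 _); rewrite g_sym.
Qed.

Lemma dist_near1 u v : step g u v -> near1 (dist u) (dist v).
Proof.
case/orP=> [/eqP->|uv]; first by rewrite /near1 leqnSn.
by apply/andP; split; apply: dist_edge; rewrite // g_sym.
Qed.

Lemma dist_shortest_path p : path g x0 p ->
  (forall q, path g x0 q -> last x0 q = last x0 p -> size p <= size q) ->
  forall i, i <= size p -> dist (nth x0 (x0 :: p) i) = i.
Proof.
move=> pp p_min i ip.
have -> : nth x0 (x0 :: p) i = last x0 (take i p).
  by rewrite (last_nth x0) size_takel //; case: i ip => //= i ip; rewrite nth_take.
have /andP[tp dp] : path g x0 (take i p) && path g (last x0 (take i p)) (drop i p).
  by rewrite -cat_path cat_take_drop.
apply/eqP; rewrite eqn_leq.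
have := dist_le tp; rewrite size_takel // => -> /=.
have xv : connect g x0 (last x0 (take i p)) by apply/connectP; exists (take i p).
have [q qp [qv <-]] := dist_walk xv.
have := p_min (q ++ drop i p).
rewrite cat_path qp qv dp last_cat qv -last_cat cat_take_drop size_cat size_drop.
by move/(_ isT erefl); lia.
Qed.

End Distance.

Lemma induced_sym (T : finType) (e : rel T) (S : {set T}) :
  symmetric e -> symmetric (induced e S).
Proof. by move=> e_sym u v; rewrite /induced /= e_sym (andbC (u \in S)). Qed.

Lemma step_induced (T : finType) (e : rel T) (S : {set T}) u v :
  u \in S -> v \in S -> step e u v -> step (induced e S) u v.
Proof. by move=> uS vS; rewrite /step /induced /= uS vS !andbT. Qed.

Lemma robber_walk_near1 (T : finType) (e : rel T) (D S : {set T}) x0 s :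
  symmetric e -> D \subset S -> robber_walk e D s ->
  sorted near1 (map (dist (induced e S) x0) s).
Proof.
move=> e_sym /subsetP DS /andP[sD s_step]; rewrite sorted_map.
apply: (sub_in_sorted (P := mem D)) s_step => // u v /DS uS /DS vS uv.
exact/dist_near1/step_induced/uv/vS/uS/induced_sym.
Qed.

Lemma shortest_in_dist (T : finType) (e : rel T) (S : {set T}) x0 p :
  path e x0 p -> shortest_in e S x0 p ->
  forall i, i <= size p -> dist (induced e S) x0 (nth x0 (x0 :: p) i) = i.
Proof.
move=> p_path [x0S pS p_min]; apply: dist_shortest_path p_min.
apply: (sub_in_path (P := mem S)) p_path; last exact/andP.
by move=> u v uS vS uv; rewrite /induced /= uv uS vS.
Qed.

Lemma closed_nbhd_seqP (T : finType) (e : rel T) (x0 : T) (s : seq T) v :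
  v \in closed_nbhd e [set x | x \in s] ->
  exists2 i, i < size s & step e (nth x0 s i) v.
Proof.
rewrite inE => /existsP[x /andP[]]; rewrite inE => xs xv.
by exists (index x s); rewrite ?index_mem // nth_index // /step eq_sym.
Qed.

Lemma not_caught_during_rcons (T : finType) (k : nat) (s : strategy T k) h r :
  ~ caught_during s (rcons h r) -> ~ caught_during s h /\ ~~ captured_after s h r.
Proof.
move=> nc; split=> [[h1 [r1 [h2 [hE c1]]]]|].
  by apply: nc; exists h1, r1, (rcons h2 r); rewrite hE rcons_cat.
by apply/negP=> c; apply: nc; exists h, r, [::]; rewrite cats1.
Qed.

Section Shadow.

Variables (T : finType) (e : rel T).
Hypothesis e_sym : symmetric e.
Variables (n : nat) (track : nat -> T).
Hypothesis track_edge : forall c, c < n -> e (track c) (track c.+1).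
Variables (m : nat) (target : 'I_m -> T -> nat).
Hypothesis target_le : forall i r, target i r <= n.

(* The state of cop [i] is its index on the track together with the vertex it
   has just moved onto to capture the robber, if any; from there it steps back
   onto the track at the next turn. *)
Definition shadow_move (i : 'I_m) (st : nat * option T) (r : T) : nat * option T :=
  match st.2 with
  | Some _ => (st.1, None)
  | None => if step e (track st.1) r then (st.1, Some r)
            else (toward st.1 (target i r), None)
  end.

Definition shadow_state (i : 'I_m) (h : seq T) : nat * option T :=
  foldl (shadow_move i) (0, None) h.

Definition shadow_pos (st : nat * option T) : T :=
  if st.2 is Some v then v else track st.1.

Definition shadow : strategy T m :=
  fun h => [ffun i => shadow_pos (shadow_state i h)].

Lemma shadow_state_rcons i h r :
  shadow_state i (rcons h r) = shadow_move i (shadow_state i h) r.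
Proof. exact: foldl_rcons. Qed.

Lemma step_toward c t : c <= n -> t <= n -> step e (track c) (track (toward c t)).
Proof.
move=> cn tn; rewrite /toward; case: ltnP => [ct|tc].
  by rewrite /step track_edge ?orbT //; lia.
case: ltnP => [tc'|ct]; last by rewrite /step eqxx.
have c_pos : 0 < c by lia.
rewrite step_sym // /step -[X in e _ (track X)](prednK c_pos).
by rewrite track_edge ?orbT //; lia.
Qed.

Lemma shadow_state_inv i h :
  let st := shadow_state i h in
  st.1 <= n /\ forall v, st.2 = Some v -> step e (track st.1) v.
Proof.
elim/last_ind: h => [|h r IH] //=; rewrite shadow_state_rcons.
case: (shadow_state i h) IH => c [v|] /= [cn cv] //; rewrite /shadow_move /=.
case: ifP => [crv | _] /=; first by split=> // v [<-].
split=> //; move: (target_le i r); rewrite /toward.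
by case: ltnP => ?; [|case: ltnP => ?]; lia.
Qed.

Lemma shadow_valid : valid_strategy e shadow.
Proof.
move=> h r i; rewrite !ffunE shadow_state_rcons.
case: (shadow_state_inv i h) => /=.
case: (shadow_state i h) => c [v|] /= cn cv; rewrite /shadow_move /shadow_pos /=.
  by rewrite step_sym // cv.
by case: ifP => //= _; apply: step_toward.
Qed.

Lemma shadow_state_uncaught i h : ~ caught_during shadow h ->
  shadow_state i h = (foldl toward 0 (map (target i) h), None).
Proof.
elim/last_ind: h => [|h r IH] // /not_caught_during_rcons[/IH sh nc].
rewrite shadow_state_rcons sh map_rcons foldl_rcons /shadow_move /=.
case: ifP => // crv; case/negP: nc; apply/existsP; exists i; apply/orP; right.
by rewrite ffunE shadow_state_rcons sh /shadow_move /= crv eqxx.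
Qed.

Lemma shadow_captures i h l r : ~ caught_during shadow (rcons h l) ->
  sorted near1 (map (target i) (rcons h l)) -> n <= size h ->
  step e (track (target i l)) r -> captured_after shadow (rcons h l) r.
Proof.
move=> nc sorted_t hn lr.
have st : shadow_state i (rcons h l) = (target i l, None).
  rewrite (shadow_state_uncaught i nc) (foldl_toward_catches (n := n)) //;
    by rewrite map_rcons ?last_rcons ?size_rcons ?size_map.
apply/existsP; exists i; apply/orP; right.
by rewrite ffunE shadow_state_rcons st /shadow_move /= lr.
Qed.

End Shadow.

Theorem lemma7 (T : finType) (e : rel T)
    (e_sym : symmetric e) (e_irr : irreflexive e)
    (D : {set T}) (x0 : T) (p : seq T)
    (P_path : is_path e (x0 :: p))
    (P_shortest : shortest_in e ([set x | x \in x0 :: p] :|: D) x0 p) :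
  exists s : strategy T 5,
    valid_strategy e s /\
    eventually_guards e D (closed_nbhd e [set x | x \in x0 :: p]) s.
Proof.
set S := [set x | x \in x0 :: p] :|: D; set n := size p.
set track := nth x0 (x0 :: p); set d := dist (induced e S) x0.
case: P_path => _ [/= p_path _].
have d_track := shortest_in_dist p_path P_shortest.
have DS : D \subset S by apply/subsetP => v vD; rewrite inE vD orbT.
have track_edge c : c < n -> e (track c) (track c.+1).
  by move=> cn; apply: (pathP x0 p_path).
pose target (k : 'I_5) r := minn n (d r + k - 2).
have target_le k r : target k r <= n by rewrite geq_minl.
exists (shadow e track target).
split; first exact: (shadow_valid e_sym track_edge target_le).
exists n.+1 => h r walk hn nc /(closed_nbhd_seqP x0)[i /= ip ir].
case/lastP: h walk hn nc => [//|h l] walk hn nc.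
have rS : r \in S.
  case/andP: (walk) => /allP rD _.
  by apply/(subsetP DS)/rD; rewrite mem_rcons mem_head.
have iS : track i \in S by rewrite inE in_set /track mem_nth.
have := robber_walk_near1 x0 e_sym DS walk.
rewrite -/d !map_rcons sorted_rcons2 -map_rcons => /andP[sorted_hl /andP[lr1 lr2]].
have /andP[ri1 ri2] : near1 (d r) i.
  rewrite -(d_track i ip) near1_sym.
  exact/dist_near1/step_induced/ir/rS/iS/induced_sym.
have k_lt5 : i + 2 - d l < 5 by lia.
pose k := Ordinal k_lt5.
have target_kl : target k l = i by rewrite /target /=; lia.
apply: (shadow_captures target_le (i := k)); rewrite ?target_kl //.
- by move: sorted_hl; rewrite !sorted_map; apply: sub_sorted => u v /(near1_shift n k).
- by rewrite size_rcons in hn.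
Qed.
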